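(* Let $u,v\ge0$ be integers and let $\beta^{i,j}$ ($0\le i\le u$, $0\le j\le v+1$) be integers such that: (1) all $\beta^{i,j}$ are nonnegative; (2) $\beta^{0,0},\beta^{0,1},\ldots,\beta^{0,v}$ are strictly positive; (3) $\beta^{0,v+1}=0$; (4) for each $0\le i\le u-1$ and $0\le j\le v$, $$\delta^{i,j}:=\beta^{i,j}+\beta^{i+1,j+1}-\beta^{i,j+1}-\beta^{i+1,j}\le0.$$ Then $\beta^{i,j}>0$ for all $0\le i\le u$ and $0\le j\le v$. *)

From Stdlib Require Import ZArith Lia.
Open Scope Z_scope.

Definition delta (beta : nat -> nat -> Z) (i j : nat) : Z :=
  beta i j + beta (S i) (S j) - beta i (S j) - beta (S i) j.

(* Condition (4) says that the row increment [beta i k - beta i j] (for [j <= k])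
   cannot increase when passing from row [i] to row [i+1]; telescoping over the
   columns and then over the rows gives
   [beta i (v+1) - beta i j <= beta 0 (v+1) - beta 0 j = - beta 0 j < 0],
   so [beta i j > beta i (v+1) >= 0]. *)
From Stdlib Require Import ZArith Lia.
Open Scope Z_scope.

Section RowIncrements.

Variable beta : nat -> nat -> Z.

Lemma row_increment_nonincreasing (i j n : nat) :
  (forall l, (j <= l < j + n)%nat -> delta beta i l <= 0) ->
  beta (S i) (j + n) - beta (S i) j <= beta i (j + n) - beta i j.
Proof.
  intros Hdelta; induction n as [|n IH].
  - rewrite Nat.add_0_r; lia.
  - assert (Hd := Hdelta (j + n)%nat ltac:(lia)); unfold delta in Hd.
    rewrite Nat.add_succ_r.
    assert (IH' := IH (fun l Hl => Hdelta l ltac:(lia))); lia.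
Qed.

Lemma row_increment_le_first_row (u j k : nat) :
  (j <= k)%nat ->
  (forall i l, (i + 1 <= u)%nat -> (j <= l < k)%nat -> delta beta i l <= 0) ->
  forall i, (i <= u)%nat -> beta i k - beta i j <= beta 0%nat k - beta 0%nat j.
Proof.
  intros Hjk Hdelta; induction i as [|i IH]; intros Hi; [lia|].
  replace k with (j + (k - j))%nat in * by lia.
  assert (Hrow := row_increment_nonincreasing i j (k - j)
                    (fun l Hl => Hdelta i l ltac:(lia) ltac:(lia))).
  specialize (IH ltac:(lia)); lia.
Qed.

End RowIncrements.

Theorem lemma4p6 (u v : nat) (beta : nat -> nat -> Z)
  (H1 : forall i j, (i <= u)%nat -> (j <= S v)%nat -> 0 <= beta i j)
  (H2 : forall j, (j <= v)%nat -> 0 < beta 0%nat j)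
  (H3 : beta 0%nat (S v) = 0)
  (H4 : forall i j, (i + 1 <= u)%nat -> (j <= v)%nat -> delta beta i j <= 0) :
  forall i j, (i <= u)%nat -> (j <= v)%nat -> 0 < beta i j.
Proof.
  intros i j Hi Hj.
  assert (Hgap := row_increment_le_first_row beta u j (S v) ltac:(lia)
                    (fun i' l Hi' Hl => H4 i' l Hi' ltac:(lia)) i Hi).
  assert (Hlast := H1 i (S v) Hi (Nat.le_refl _)).
  assert (Hfirst := H2 j Hj).
  lia.
Qed.
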